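(* Assume $C^\top C\succ0$, let $\gamma>0$, $\sigma>0$, $\lambda>0$, and let $(\widetilde W_r)_{r\ge0}$ be generated by the alternating scheme of the context from a feasible initial point $\widetilde W_0\in\mathcal{X}_1$, $y_0\in\mathbb{R}^{mn}_+$. Let $H^\infty_\sigma=\lim_{r\to\infty}H_\sigma(\widetilde W_r)$ (the sequence $H_\sigma(\widetilde W_r)$ is nonincreasing and bounded below) and $H^*_\sigma=\inf_{\widetilde W}H_\sigma(\widetilde W)$. If $H^\infty_\sigma=H^*_\sigma$, then every cluster point of $(\widetilde W_r)$ belongs to $\operatorname{argmin}H_\sigma$.
   Context: Let $n,m,M\ge1$, $p=m+n$. For $i=1,\dots,M$ let $A_i\in\mathbb{R}^{n\times n}$, $B_{2,i}\in\mathbb{R}^{n\times m}$, $F_i=\begin{bmatrix}A_i&B_{2,i}\\0&0\end{bmatrix}$. Let $B_1\in\mathbb{R}^{n\times l}$, $C\in\mathbb{R}^{q\times n}$, $D\in\mathbb{R}^{q\times m}$ with $C^\top D=0$, $D^\top D\succ0$, $B_1B_1^\top\succ0$; $Q=\begin{bmatrix}B_1B_1^\top&0\\0&0\end{bmatrix}$, $R=\begin{bmatrix}C^\top C&0\\0&D^\top D\end{bmatrix}$, $V_1=[0,\ I_m]$, $V_2=[I_n,\ 0]$, $\Psi_i(W)=-V_2(F_iW+WF_i^\top+Q)V_2^\top$. $\mathrm{vec}$ is column-stacking; $\mathcal{P}:=V_2\otimes V_1$, so $\mathcal{P}\,\mathrm{vec}(W)=\mathrm{vec}(V_1WV_2^\top)$.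 $\Gamma^k_+=\{\mathrm{vec}(X):X\in\mathbb{S}^k_+\}$, $\delta_S$ the indicator of $S$, $\Omega=\{\mathrm{vec}(W):W_{ij}=0,\ 1\le i<j\le n\}$, $\mathcal{X}_1=\{\mathrm{vec}(W)\in\Gamma^p_+:\mathrm{vec}(\Psi_i(W))\in\Gamma^n_+\ \forall i,\ \mathrm{vec}(W)\in\Omega\}$, $r_1(\widetilde W)=\langle\mathrm{vec}(R),\widetilde W\rangle+\delta_{\mathcal{X}_1}(\widetilde W)$. For $x\in\mathbb{R}^{mn}$, $f_\sigma(x)=\sum_\ell(1-e^{-x_\ell/\sigma})$, $g_\sigma=-f_\sigma$, $g_\sigma^*$ its convex conjugate; $|\cdot|$ componentwise. $H_\sigma(\widetilde W)=r_1(\widetilde W)+\gamma f_\sigma(|\mathcal{P}\widetilde W|)$. Scheme: for $r=1,2,\dots$: if $r$ is odd, $\widetilde W_r=\widetilde W_{r-1}$ and $y_r=\operatorname{argmin}_{y\in\mathbb{R}^{mn}_+}\{\gamma g_\sigma^*(-y)+\gamma y^\top|\mathcal{P}\widetilde W_{r-1}|\}=\nabla f_\sigma(|\mathcal{P}\widetilde W_{r-1}|)$; if $r$ is even, $y_r=y_{r-1}$ and $\widetilde W_r\in\operatorname{argmin}_{\widetilde W\in\mathcal{X}_1}\{\langle\mathrm{vec}(R),\widetilde W\rangle+\gamma y_{r-1}^\top|\mathcal{P}\widetilde W|+\frac1{2\lambda}\|\widetilde W-\widetilde W_{r-1}\|^2\}$. *)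

From HB Require Import structures.
From mathcomp Require Import all_boot all_order all_algebra.
From mathcomp Require Import all_classical all_reals all_analysis.
Set Implicit Arguments. Unset Strict Implicit. Unset Printing Implicit Defensive.
Import Order.TTheory GRing.Theory Num.Theory.
Local Open Scope ring_scope.

Section Defs.
Variable R : realType.

Definition psd (k : nat) (X : 'M[R]_k) : Prop :=
  X^T = X /\ forall v : 'cV[R]_k, 0 <= (v^T *m X *m v) 0 0.

Definition pd (k : nat) (X : 'M[R]_k) : Prop :=
  X^T = X /\ forall v : 'cV[R]_k, v != 0 -> 0 < (v^T *m X *m v) 0 0.

Variables n m : nat.
(* p = n + m, with the first block of size n (as in F_i, Q, R, V1, V2). *)

Definition Fmx (A : 'M[R]_n) (B2 : 'M[R]_(n, m)) : 'M[R]_(n + m) :=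
  block_mx A B2 0 0.

Definition Qmx (l : nat) (B1 : 'M[R]_(n, l)) : 'M[R]_(n + m) :=
  block_mx (B1 *m B1^T) 0 0 0.

Definition Rmx (q : nat) (C : 'M[R]_(q, n)) (D : 'M[R]_(q, m)) : 'M[R]_(n + m) :=
  block_mx (C^T *m C) 0 0 (D^T *m D).

Definition V1 : 'M[R]_(m, n + m) := row_mx 0 1%:M.
Definition V2 : 'M[R]_(n, n + m) := row_mx 1%:M 0.

Definition Psi (l : nat) (A : 'M[R]_n) (B2 : 'M[R]_(n, m)) (B1 : 'M[R]_(n, l))
  (W : 'M[R]_(n + m)) : 'M[R]_n :=
  - (V2 *m (Fmx A B2 *m W + W *m (Fmx A B2)^T + Qmx B1) *m V2^T).

(* Omega: W_ij = 0 for 1 <= i < j <= n (0-based: i < j < n) *)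
Definition Omega (W : 'M[R]_(n + m)) : Prop :=
  forall i j : 'I_(n + m), (i < j)%N -> (j < n)%N -> W i j = 0.

Definition X1 (M l : nat) (A : 'I_M -> 'M[R]_n) (B2 : 'I_M -> 'M[R]_(n, m))
  (B1 : 'M[R]_(n, l)) (W : 'M[R]_(n + m)) : Prop :=
  psd W /\ (forall i : 'I_M, psd (Psi (A i) (B2 i) B1 W)) /\ Omega W.

(* <vec X, vec Y> : Euclidean inner product of the vectorizations *)
Definition inner (a b : nat) (X Y : 'M[R]_(a, b)) : R :=
  \sum_(i < a) \sum_(j < b) X i j * Y i j.

Definition sqnorm (a b : nat) (X : 'M[R]_(a, b)) : R := inner X X.

(* P vec(W) = vec(V1 W V2^T) *)
Definition Pmx (W : 'M[R]_(n + m)) : 'M[R]_(m, n) := V1 *m W *m V2^T.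

Definition absmx (a b : nat) (X : 'M[R]_(a, b)) : 'M[R]_(a, b) :=
  map_mx (fun x => `|x|) X.

(* f_sigma(x) = sum_l (1 - exp(-x_l/sigma)), x in R^{mn} (stored as m x n) *)
Definition fsig (sigma : R) (x : 'M[R]_(m, n)) : R :=
  \sum_(i < m) \sum_(j < n) (1 - expR (- x i j / sigma)).

Definition grad_fsig (sigma : R) (x : 'M[R]_(m, n)) : 'M[R]_(m, n) :=
  \matrix_(i, j) (expR (- x i j / sigma) / sigma).

Definition Hsig (M l q : nat) (A : 'I_M -> 'M[R]_n) (B2 : 'I_M -> 'M[R]_(n, m))
  (B1 : 'M[R]_(n, l)) (C : 'M[R]_(q, n)) (D : 'M[R]_(q, m))
  (gamma sigma : R) (W : 'M[R]_(n + m)) : \bar R :=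
  if `[< X1 A B2 B1 W >] then
    ((inner (Rmx C D) W + gamma * fsig sigma (absmx (Pmx W))) : R)%:E
  else +oo%E.

Definition Wstep_obj (q : nat) (C : 'M[R]_(q, n)) (D : 'M[R]_(q, m))
  (gamma lambda : R) (y : 'M[R]_(m, n)) (Wprev W : 'M[R]_(n + m)) : R :=
  inner (Rmx C D) W + gamma * inner y (absmx (Pmx W))
  + (2 * lambda)^-1 * sqnorm (W - Wprev).

Definition alt_scheme (M l q : nat) (A : 'I_M -> 'M[R]_n) (B2 : 'I_M -> 'M[R]_(n, m))
  (B1 : 'M[R]_(n, l)) (C : 'M[R]_(q, n)) (D : 'M[R]_(q, m))
  (gamma sigma lambda : R)
  (W : nat -> 'M[R]_(n + m)) (y : nat -> 'M[R]_(m, n)) : Prop :=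
  forall r : nat, (0 < r)%N ->
    if odd r then
      W r = W r.-1 /\ y r = grad_fsig sigma (absmx (Pmx (W r.-1)))
    else
      y r = y r.-1 /\ X1 A B2 B1 (W r) /\
      forall W' : 'M[R]_(n + m), X1 A B2 B1 W' ->
        Wstep_obj C D gamma lambda (y r.-1) (W r.-1) (W r)
        <= Wstep_obj C D gamma lambda (y r.-1) (W r.-1) W'.

End Defs.

From HB Require Import structures.
From mathcomp Require Import all_boot all_order all_algebra.
From mathcomp Require Import all_classical all_reals all_analysis.
From mathcomp Require Import ring lra.
Import Order.TTheory GRing.Theory Num.Theory.
Import numFieldNormedType.Exports.
Local Open Scope ring_scope.
Local Open Scope classical_set_scope.

(* Since f_sigma is concave, its linearisation at |P W_(r-1)|, whose slope is
   y_r, majorises it; so the W-step, which minimises that majorant plus a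
   proximal term, gives H(W_r) + |W_r - W_(r-1)|^2 / (2 lambda) <= H(W_(r-1)),
   while the y-step leaves W unchanged.  Hence H(W_r) decreases to
   H^inf = inf_r H(W_r).  All W_r lie in the closed set X_1, on which H_sigma
   is continuous, so a cluster point Wbar is feasible and
   H(Wbar) <= H^inf = H^*. *)

Section entrywise_continuity.
Context {R : realType} {T : topologicalType}.

Definition mx_continuous {a b} (F : T -> 'M[R]_(a, b)) :=
  forall i j, continuous (fun t => F t i j).

Lemma continuous_sum {k} (f : 'I_k -> T -> R) :
  (forall i, continuous (f i)) -> continuous (fun t => \sum_(i < k) f i t).
Proof.
by move=> fc; apply: continuous_big => [|i _]; [exact: add_continuous | exact: fc].
Qed.

Lemma mx_continuous_cst {a b} (X : 'M[R]_(a, b)) : mx_continuous (fun _ => X).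
Proof. by move=> i j t; exact: cvg_cst. Qed.

Lemma mx_continuousD {a b} {F G : T -> 'M[R]_(a, b)} :
  mx_continuous F -> mx_continuous G -> mx_continuous (fun t => F t + G t).
Proof.
move=> cF cG i j t; under eq_fun do rewrite mxE.
exact: cvgD (cF i j t) (cG i j t).
Qed.

Lemma mx_continuousN {a b} {F : T -> 'M[R]_(a, b)} :
  mx_continuous F -> mx_continuous (fun t => - F t).
Proof. by move=> cF i j t; under eq_fun do rewrite mxE; exact: cvgN (cF i j t). Qed.

Lemma mx_continuous_mulmx {a b c} {F : T -> 'M[R]_(a, b)} {G : T -> 'M[R]_(b, c)} :
  mx_continuous F -> mx_continuous G -> mx_continuous (fun t => F t *m G t).
Proof.
move=> cF cG i j; under eq_fun do rewrite mxE.
by apply: continuous_sum => k t; exact: cvgM (cF i k t) (cG k j t).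
Qed.

Lemma mx_continuous_map {a b} {F : T -> 'M[R]_(a, b)} {h : R -> R} :
  mx_continuous F -> continuous h -> mx_continuous (fun t => map_mx h (F t)).
Proof.
move=> cF ch i j; under eq_fun do rewrite mxE.
by move=> t; apply: continuous_comp; [exact: cF | exact: ch].
Qed.

Lemma continuous_inner {a b} (X : 'M[R]_(a, b)) {F : T -> 'M[R]_(a, b)} :
  mx_continuous F -> continuous (fun t => inner X (F t)).
Proof.
move=> cF; apply: continuous_sum => i; apply: continuous_sum => j t.
exact: cvgM (cvg_cst _) (cF i j t).
Qed.

Lemma continuous_fsig {a b} (sigma : R) {F : T -> 'M[R]_(a, b)} :
  mx_continuous F -> continuous (fun t => fsig sigma (F t)).
Proof.
move=> cF; apply: continuous_sum => i; apply: continuous_sum => j t.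
apply: cvgB; first exact: cvg_cst.
apply: continuous_comp; last exact: continuous_expR.
exact: cvgM (cvgN (cF i j t)) (cvg_cst _).
Qed.

End entrywise_continuity.

Lemma mx_continuous_id {R : realType} {a b} : mx_continuous (fun X : 'M[R]_(a, b) => X).
Proof. by move=> i j; exact: coord_continuous. Qed.

Section cluster_point.
Context {T : topologicalType} {F : set_system T} {FF : Filter F} {x : T}.
Hypothesis Fx : cluster F x.

Lemma cluster_closed (A : set T) : closed A -> F A -> A x.
Proof. by move=> cA FA; apply: cA; move: Fx; rewrite clusterE; exact. Qed.

Lemma cluster_le {R : realType} (phi : T -> R) c :
  continuous phi -> F [set t | phi t <= c] -> phi x <= c.
Proof.
move=> cphi; apply: cluster_closed.
by apply: (preimage_closed _ (@closed_le _ c)) => t _; exact: cphi.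
Qed.

Lemma cluster_ge {R : realType} (phi : T -> R) c :
  continuous phi -> F [set t | c <= phi t] -> c <= phi x.
Proof.
move=> cphi; apply: cluster_closed.
by apply: (preimage_closed _ (@closed_ge _ c)) => t _; exact: cphi.
Qed.

Lemma cluster_eq {R : realType} (phi : T -> R) c :
  continuous phi -> F [set t | phi t = c] -> phi x = c.
Proof.
move=> cphi; apply: cluster_closed.
by apply: (preimage_closed _ (@closed_eq _ c)) => t _; exact: cphi.
Qed.

Lemma cluster_psd {R : realType} {k} {P : T -> 'M[R]_k} :
  mx_continuous P -> F [set t | psd (P t)] -> psd (P x).
Proof.
move=> cP FP; split.
  apply/matrixP => i j; rewrite mxE; apply/eqP; rewrite -subr_eq0; apply/eqP.
  apply: (cluster_eq (fun t => P t j i - P t i j)) => [t|].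
    exact: cvgB (cP j i t) (cP i j t).
  by apply: filterS FP => t [/matrixP/(_ i j)]; rewrite mxE => Pji; rewrite /= Pji subrr.
move=> v; apply: (@cluster_ge _ (fun t => (v^T *m P t *m v) 0 0)).
  exact: (mx_continuous_mulmx
    (mx_continuous_mulmx (mx_continuous_cst _) cP) (mx_continuous_cst _)).
by apply: filterS FP => t [_]; apply.
Qed.

End cluster_point.

Lemma sqnorm_ge0 {R : realType} {a b} (X : 'M[R]_(a, b)) : 0 <= sqnorm X.
Proof. by apply: sumr_ge0 => i _; apply: sumr_ge0 => j _; rewrite -expr2 sqr_ge0. Qed.

Lemma sqnorm0 {R : realType} {a b} : sqnorm (0 : 'M[R]_(a, b)) = 0.
Proof. by apply: big1 => i _; apply: big1 => j _; rewrite mxE mulr0. Qed.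

Lemma one_subr_expR_le_tangent {R : realType} (sigma a b : R) : 0 < sigma ->
  1 - expR (- b / sigma) <=
  1 - expR (- a / sigma) + expR (- a / sigma) / sigma * (b - a).
Proof.
move=> sigma_gt0; set e := expR (- a / sigma).
have -> : expR (- b / sigma) = e * expR ((a - b) / sigma).
  by rewrite -expRD; congr expR; field; rewrite gt_eqF.
have : e * (1 + (a - b) / sigma) <= e * expR ((a - b) / sigma).
  by rewrite ler_pM2l ?expR_gt0 ?expR_ge1Dx.
have -> : e / sigma * (b - a) = - (e * ((a - b) / sigma)) by field; rewrite gt_eqF.
lra.
Qed.

Lemma fsig_le_tangent {R : realType} {a b} (sigma : R) (x x' : 'M[R]_(a, b)) :
  0 < sigma ->
  fsig sigma x' <= fsig sigma x +
    (inner (grad_fsig sigma x) x' - inner (grad_fsig sigma x) x).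
Proof.
move=> sigma_gt0; rewrite /fsig /inner -sumrB -big_split /=; apply: ler_sum => i _.
rewrite -sumrB -big_split /=; apply: ler_sum => j _; rewrite !mxE -mulrBr.
exact: one_subr_expR_le_tangent.
Qed.

Section feasible_set.
Context {R : realType} {n m M l : nat}.
Context {A : 'I_M -> 'M[R]_n} {B2 : 'I_M -> 'M[R]_(n, m)} {B1 : 'M[R]_(n, l)}.

Lemma mx_continuous_Psi (A0 : 'M[R]_n) (B20 : 'M[R]_(n, m)) :
  mx_continuous (Psi A0 B20 B1).
Proof.
apply: mx_continuousN; apply: mx_continuous_mulmx (mx_continuous_cst _).
apply: mx_continuous_mulmx (mx_continuous_cst _) _.
apply: mx_continuousD (mx_continuous_cst _).
apply: mx_continuousD.
  exact: mx_continuous_mulmx (mx_continuous_cst _) mx_continuous_id.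
exact: mx_continuous_mulmx mx_continuous_id (mx_continuous_cst _).
Qed.

Lemma X1_cluster {F : set_system 'M[R]_(n + m)} {FF : Filter F} {Wbar} :
  cluster F Wbar -> F [set W | X1 A B2 B1 W] -> X1 A B2 B1 Wbar.
Proof.
move=> Wbar_cl FX; split; [|split].
- apply: (cluster_psd Wbar_cl mx_continuous_id).
  by apply: filterS FX => W [].
- move=> i; apply: (cluster_psd Wbar_cl (mx_continuous_Psi (A i) (B2 i))).
  by apply: filterS FX => W [_ [+ _]]; apply.
- move=> i j ij jn; apply: (cluster_eq Wbar_cl (fun W => W i j)).
    exact: coord_continuous.
  by apply: filterS FX => W [_ [_]]; apply.
Qed.

End feasible_set.

Definition Hsig_fin {R : realType} {n m q : nat} (C : 'M[R]_(q, n)) (D : 'M[R]_(q, m))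
    (gamma sigma : R) (W : 'M[R]_(n + m)) : R :=
  inner (Rmx C D) W + gamma * fsig sigma (absmx (Pmx W)).

Section objective.
Context {R : realType} {n m M l q : nat}.
Context {A : 'I_M -> 'M[R]_n} {B2 : 'I_M -> 'M[R]_(n, m)} {B1 : 'M[R]_(n, l)}.
Context {C : 'M[R]_(q, n)} {D : 'M[R]_(q, m)} {gamma sigma : R}.

Local Notation H := (Hsig A B2 B1 C D gamma sigma).
Local Notation Hfin := (Hsig_fin C D gamma sigma).

Lemma HsigE W : X1 A B2 B1 W -> H W = (Hfin W)%:E.
Proof. by move=> XW; rewrite /Hsig asboolT. Qed.

Lemma continuous_Hsig_fin : continuous Hfin.
Proof.
have cP : mx_continuous (fun W : 'M[R]_(n + m) => absmx (Pmx W)).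
  rewrite /absmx; apply: mx_continuous_map; last exact: norm_continuous.
  exact: mx_continuous_mulmx
    (mx_continuous_mulmx (mx_continuous_cst _) mx_continuous_id) (mx_continuous_cst _).
move=> W; apply: cvgD (continuous_inner _ mx_continuous_id W) _.
exact: cvgM (cvg_cst _) (continuous_fsig _ cP W).
Qed.

Lemma Wstep_sufficient_decrease {lambda Wprev Wnew} : 0 <= gamma -> 0 < sigma ->
  X1 A B2 B1 Wprev ->
  (forall W', X1 A B2 B1 W' ->
     Wstep_obj C D gamma lambda (grad_fsig sigma (absmx (Pmx Wprev))) Wprev Wnew
     <= Wstep_obj C D gamma lambda (grad_fsig sigma (absmx (Pmx Wprev))) Wprev W') ->
  Hfin Wnew + (2 * lambda)^-1 * sqnorm (Wnew - Wprev) <= Hfin Wprev.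
Proof.
move=> gamma_ge0 sigma_gt0 XWprev /(_ Wprev XWprev).
rewrite /Wstep_obj subrr sqnorm0 mulr0 addr0 /Hsig_fin.
have := fsig_le_tangent sigma (absmx (Pmx Wprev)) (absmx (Pmx Wnew)) sigma_gt0.
move=> /(ler_wpM2l gamma_ge0); rewrite mulrDr mulrBr.
lra.
Qed.

Section alternating_scheme.
Context {lambda : R} {W : nat -> 'M[R]_(n + m)} {y : nat -> 'M[R]_(m, n)}.
Hypotheses (gamma_ge0 : 0 <= gamma) (sigma_gt0 : 0 < sigma) (lambda_ge0 : 0 <= lambda).
Hypothesis scheme : alt_scheme A B2 B1 C D gamma sigma lambda W y.
Hypothesis XW0 : X1 A B2 B1 (W 0%N).

Lemma alt_scheme_X1 r : X1 A B2 B1 (W r).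
Proof.
elim: r => [//|r IHr]; have := scheme r.+1 isT.
by case: (odd r.+1) => [[-> _]|[_ []]].
Qed.

Lemma alt_scheme_descent r : Hfin (W r.+1) <= Hfin (W r).
Proof.
have := scheme r.+1 isT; case: ifPn => [_ [-> _] //|].
case: r => [//|r] /negPn r_odd [_ [_ Wmin]].
have := scheme r.+1 isT; rewrite (r_odd : odd r.+1) => -[EW Ey].
rewrite /= Ey -EW in Wmin.
apply: le_trans (Wstep_sufficient_decrease gamma_ge0 sigma_gt0 (alt_scheme_X1 _) Wmin).
by rewrite lerDl mulr_ge0 ?sqnorm_ge0 // invr_ge0 mulr_ge0.
Qed.

End alternating_scheme.

End objective.

Theorem theorem29 (R : realType) (n m M l q : nat)
  (A : 'I_M -> 'M[R]_n) (B2 : 'I_M -> 'M[R]_(n, m))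
  (B1 : 'M[R]_(n, l)) (C : 'M[R]_(q, n)) (D : 'M[R]_(q, m))
  (gamma sigma lambda : R)
  (W : nat -> 'M[R]_(n + m)) (y : nat -> 'M[R]_(m, n)) :
  (0 < n)%N -> (0 < m)%N -> (0 < M)%N ->
  C^T *m D = 0 -> pd (D^T *m D) -> pd (B1 *m B1^T) ->
  pd (C^T *m C) ->
  0 < gamma -> 0 < sigma -> 0 < lambda ->
  X1 A B2 B1 (W 0%N) -> (forall i j, 0 <= y 0%N i j) ->
  alt_scheme A B2 B1 C D gamma sigma lambda W y ->
  limn (fun r => Hsig A B2 B1 C D gamma sigma (W r))
    = ereal_inf (range (Hsig A B2 B1 C D gamma sigma)) ->
  forall Wbar : 'M[R]_(n + m), cluster (W @ \oo) Wbar ->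
    forall W' : 'M[R]_(n + m),
      (Hsig A B2 B1 C D gamma sigma Wbar <= Hsig A B2 B1 C D gamma sigma W')%E.
Proof.
move=> _ _ _ _ _ _ _ gamma_gt0 sigma_gt0 lambda_gt0 XW0 _ scheme Hlim Wbar Wbar_cl W'.
have gamma_ge0 := ltW gamma_gt0.
have XW := alt_scheme_X1 scheme XW0.
have Hfin_decr : nonincreasing_seq (Hsig_fin C D gamma sigma \o W).
  apply/nonincreasing_seqP => r.
  exact: alt_scheme_descent gamma_ge0 sigma_gt0 (ltW lambda_gt0) scheme XW0 r.
have HWbar r : Hsig_fin C D gamma sigma Wbar <= Hsig_fin C D gamma sigma (W r).
  apply: (cluster_le Wbar_cl _ _ continuous_Hsig_fin).
  by exists r => // s /= /Hfin_decr.
have HW_cvg : Hsig A B2 B1 C D gamma sigma \o W @ \oo -->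
    ereal_inf (range (Hsig A B2 B1 C D gamma sigma \o W)).
  apply: ereal_nonincreasing_cvgn => r s /Hfin_decr.
  by rewrite /= !HsigE ?XW ?lee_fin.
have XWbar : X1 A B2 B1 Wbar.
  by apply: (X1_cluster Wbar_cl); exists 0%N => // r _; exact: XW.
rewrite HsigE //.
apply: (@le_trans _ _ (ereal_inf (range (Hsig A B2 B1 C D gamma sigma \o W)))).
  apply: le_ereal_inf_tmp => _ [r _ <-].
  by rewrite /= HsigE ?XW ?lee_fin.
by rewrite -(cvg_lim _ HW_cvg) // Hlim; exact: ereal_inf_lbound.
Qed.
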